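(* Every radically finite ring of finite Krull dimension is Noetherian.
   Context: All rings are commutative with identity. An ideal $I$ of $R$ is called radically perfect if $\mathrm{ht}(I)=\inf\{n \mid \sqrt{I}=\sqrt{(\theta_1,\dots,\theta_n)} \text{ for some } \theta_1,\dots,\theta_n\in R\}$, and moreover, if $\mathrm{ht}(I)=0$, then $\sqrt{I}=\sqrt{(\theta)}$ for some zero divisor $\theta$ of $R$. A ring $R$ is called radically finite if every prime ideal $P$ of $R$ is radically perfect and, in addition, the set of ideals of $R$ that are generated by $\mathrm{ht}(P)$ elements and have radical $P$ has a maximal member $A$ such that there are only finitely many ideals in any chain of ideals between $A$ and $P$. *)

From HB Require Import structures.
From mathcomp Require Import all_boot all_order all_algebra.
From mathcomp Require Import boolp classical_sets cardinality.
Set Implicit Arguments. Unset Strict Implicit. Unset Printing Implicit Defensive.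
Import GRing.Theory.
Local Open Scope classical_set_scope.
Local Open Scope ring_scope.

Section RingDefs.
Variable R : comPzRingType.

Definition is_ideal (I : set R) : Prop :=
  I 0 /\ (forall x y, I x -> I y -> I (x + y)) /\ (forall r x, I x -> I (r * x)).

Definition is_prime (P : set R) : Prop :=
  is_ideal P /\ ~ P 1 /\ (forall x y, P (x * y) -> P x \/ P y).

Definition rad (I : set R) : set R := [set x | exists n : nat, I (x ^+ n)].

Definition gen_ideal (n : nat) (th : 'I_n -> R) : set R :=
  [set x | exists r : 'I_n -> R, x = \sum_(i < n) r i * th i].

Definition zero_divisor (t : R) : Prop := exists y : R, y != 0 /\ t * y = 0.

Definition prime_ht_le (P : set R) (n : nat) : Prop :=
  forall (m : nat) (p : nat -> set R),
    (forall i, (i <= m)%N -> is_prime (p i)) ->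
    (forall i, (i < m)%N -> p i `<` p i.+1) ->
    p m = P -> (m <= n)%N.

(* ht(I) <= n, where ht(I) = inf of ht(P) over primes P containing I. *)
Definition ht_le (I : set R) (n : nat) : Prop :=
  exists P, is_prime P /\ I `<=` P /\ prime_ht_le P n.

(* ht(I) = n (a finite value). ht(I) is infinite iff no n satisfies this. *)
Definition ht_eq (I : set R) (n : nat) : Prop :=
  ht_le I n /\ forall m, ht_le I m -> (n <= m)%N.

Definition rad_gen_by (I : set R) (n : nat) : Prop :=
  exists th : 'I_n -> R, rad I = rad (gen_ideal th).

Definition rad_gen_num (I : set R) (n : nat) : Prop :=
  rad_gen_by I n /\ forall m, rad_gen_by I m -> (n <= m)%N.

(* I radically perfect: ht(I) equals the infimum (both finite and equal, or
   both infinite), and if ht(I) = 0, sqrt I = sqrt (theta) for a zero divisor. *)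
Definition radically_perfect (I : set R) : Prop :=
  (forall n, ht_eq I n <-> rad_gen_num I n) /\
  (ht_eq I 0 -> exists t, zero_divisor t /\ rad I = rad (gen_ideal (fun _ : 'I_1 => t))).

Definition gen_set_for (P : set R) (n : nat) : set (set R) :=
  [set A | exists th : 'I_n -> R, A = gen_ideal th /\ rad A = P].

Definition is_chain (C : set (set R)) : Prop :=
  forall J K, C J -> C K -> J `<=` K \/ K `<=` J.

Definition radically_finite : Prop :=
  forall P, is_prime P ->
    radically_perfect P /\
    exists n, ht_eq P n /\
      exists A, gen_set_for P n A /\
        (forall B, gen_set_for P n B -> A `<=` B -> B = A) /\
        (forall C : set (set R),
           (forall J, C J -> is_ideal J /\ A `<=` J /\ J `<=` P) ->
           is_chain C -> finite_set C).

Definition finite_krull_dim : Prop :=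
  exists d : nat, forall (m : nat) (p : nat -> set R),
    (forall i, (i <= m)%N -> is_prime (p i)) ->
    (forall i, (i < m)%N -> p i `<` p i.+1) -> (m <= d)%N.

Definition noetherian : Prop :=
  forall I, is_ideal I -> exists (n : nat) (th : 'I_n -> R), I = gen_ideal th.

End RingDefs.

(* By Cohen's theorem it suffices that every prime P is finitely generated.
   Radical finiteness provides a finitely generated ideal A with radical P such
   that every chain of ideals between A and P is finite.  If P were not
   finitely generated, adjoining to A elements of P one at a time would give an
   infinite strictly ascending chain between A and P. *)
From mathcomp Require Import all_boot all_order all_algebra.
From mathcomp Require Import boolp classical_sets cardinality.
Set Implicit Arguments. Unset Strict Implicit. Unset Printing Implicit Defensive.
Import GRing.Theory.
Local Open Scope classical_set_scope.
Local Open Scope ring_scope.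

Lemma Zorn_bigcup_nonempty T (P : set (set T)) : P !=set0 ->
  (forall F, F `<=` P -> F !=set0 -> total_on F subset ->
    P (\bigcup_(X in F) X)) ->
  exists A, P A /\ forall B, A `<` B -> ~ P B.
Proof.
(* [Zorn_bigcup] also asks for the union of the empty chain, so add [set0]. *)
move=> [A0 PA0] hP; pose P' := P `|` [set set0].
have [A [P'A Amax]] : exists A, P' A /\ forall B, A `<` B -> ~ P' B.
  apply: Zorn_bigcup => F FP' Ftot.
  have [[X [FX PX]]|noP] := pselect (exists X, F X /\ P X).
    left; suff -> : \bigcup_(Y in F) Y = \bigcup_(Y in F `&` P) Y.
      by apply: hP => [Y []|//|Y Z [FY _] [FZ _]]; [|exists X|exact: Ftot].
    apply/seteqP; split=> x [Y FY Yx]; exists Y => //; last by case: FY.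
    by split=> //; case: (FP' Y FY) => // Y0; rewrite Y0 in Yx.
  right; apply/seteqP; split=> x // [Y FY]; case: (FP' Y FY) => [PY|->] //.
  by case: noP; exists Y.
suff PA : P A by exists A; split=> // B /Amax nP'B PB; apply: nP'B; left.
case: P'A => // A0'; apply: contrapT => nPA; apply: (Amax A0); last by left.
rewrite A0' properEneq; split=> //; apply/eqP => A00; apply: nPA.
by rewrite A0' A00.
Qed.

Section StrictChains.
Variables (T : Type) (f : nat -> set T).
Hypothesis f_strict : forall k, f k `<` f k.+1.

Lemma strict_chain_le m n : (m <= n)%N -> f m `<=` f n.
Proof.
elim: n => [|n IH]; first by rewrite leqn0 => /eqP ->.
rewrite leq_eqVlt => /orP [/eqP -> //|]; rewrite ltnS => /IH hmn.
by apply: subset_trans hmn (properW (f_strict n)).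
Qed.

Lemma strict_chain_lt m n : (m < n)%N -> f m `<` f n.
Proof.
move=> lt_mn; split; first exact/strict_chain_le/ltnW.
by move=> /(subset_trans (strict_chain_le lt_mn)); apply: (f_strict m).2.
Qed.

Lemma strict_chain_range_infinite : infinite_set (range f).
Proof.
have f_inj : injective f.
  move=> m n efmn; apply: contrapT => /eqP; rewrite neq_ltn => /orP [] lt.
    by have := strict_chain_lt lt; rewrite efmn; apply: properxx.
  by have := strict_chain_lt lt; rewrite efmn; apply: properxx.
move=> fin; apply: infinite_nat; rewrite -(preimage_range f).
by apply: finite_preimage fin => m n _ _; apply: f_inj.
Qed.

End StrictChains.

Section GeneratedIdeals.
Variable R : comPzRingType.
Implicit Types (I J Q : set R) (s t : seq R) (x : R).

Lemma idealB I x y : is_ideal I -> I x -> I y -> I (x - y).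
Proof.
by move=> [_ [ID IM]] Ix Iy; apply: ID => //; rewrite -mulN1r; exact: IM.
Qed.

Fixpoint gen_seq s : set R :=
  if s is a :: s' then [set z | exists r y, gen_seq s' y /\ z = r * a + y]
  else [set 0].

Definition finitely_generated I := exists s, I = gen_seq s.

Lemma gen_seq_ideal s : is_ideal (gen_seq s).
Proof.
elim: s => [|a s [IH0 [IHD IHM]]] /=.
  by split=> //; split=> [x y -> ->|r x ->]; rewrite ?addr0 ?mulr0.
split; first by exists 0, 0; rewrite mul0r addr0.
split => [x y [r1 [y1 [h1 ->]]] [r2 [y2 [h2 ->]]]|c x [r [y [h ->]]]].
  exists (r1 + r2), (y1 + y2); split; first exact: IHD.
  by rewrite mulrDl -!addrA (addrCA y1).
by exists (c * r), (c * y); split; [exact: IHM | rewrite mulrDr mulrA].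
Qed.

Lemma gen_seq_min s I : is_ideal I -> (forall x, x \in s -> I x) ->
  gen_seq s `<=` I.
Proof.
move=> [I0 [ID IM]]; elim: s => [|a s IH] hs x /=; first by move->.
move=> [r [y [hy ->]]]; apply: ID; first by apply/IM/hs; rewrite mem_head.
by apply: IH hy => z hz; apply: hs; rewrite inE hz orbT.
Qed.

Lemma gen_seq_cons a s : gen_seq s `<=` gen_seq (a :: s).
Proof. by move=> y hy; exists 0, y; rewrite mul0r add0r. Qed.

Lemma gen_seq_mem s x : x \in s -> gen_seq s x.
Proof.
elim: s => [|a s IH] //; rewrite inE => /orP [/eqP ->|/IH]; last first.
  exact: gen_seq_cons.
by exists 1, 0; split; [case: (gen_seq_ideal s) | rewrite mul1r addr0].
Qed.

Lemma gen_seq_cat s t y z :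
  gen_seq s y -> gen_seq t z -> gen_seq (s ++ t) (y + z).
Proof.
elim: s y => [|a s IH] y /=; first by move=> -> hz; rewrite add0r.
move=> [r [y' [hy' ->]]] hz; exists r, (y' + z); split; first exact: IH.
by rewrite addrA.
Qed.

Lemma gen_seq_mulr s x y : gen_seq s y -> gen_seq [seq u * x | u <- s] (y * x).
Proof.
elim: s y => [|a s IH] y /=; first by move->; rewrite mul0r.
move=> [r [y' [hy' ->]]]; exists r, (y' * x); split; first exact: IH.
by rewrite mulrDl mulrA.
Qed.

Lemma gen_idealE n (th : 'I_n -> R) :
  gen_ideal th = gen_seq [seq th i | i <- enum 'I_n].
Proof.
elim: n th => [|n IH] th; apply/seteqP; split => x /=.
- by move=> [r ->]; rewrite big_ord0 enum_ord0.
- by rewrite enum_ord0 => ->; exists (fun _ => 0); rewrite big_ord0.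
- move=> [r ->]; rewrite big_ord_recl enum_ordSl /= -map_comp; exists (r ord0).
  exists (\sum_(i < n) r (lift ord0 i) * th (lift ord0 i)); split => //.
  by rewrite -(IH (th \o lift ord0)); exists (r \o lift ord0).
- rewrite enum_ordSl /= -map_comp => -[c [y [+ ->]]].
  rewrite -(IH (th \o lift ord0)) => -[r ->].
  exists (fun i => if unlift ord0 i is Some j then r j else c).
  rewrite big_ord_recl unlift_none; congr (_ + _).
  by apply: eq_bigr => i _; rewrite liftK.
Qed.

Lemma gen_seq_gen_ideal s : gen_seq s = gen_ideal (fun i : 'I_(size s) => s`_i).
Proof. by rewrite gen_idealE map_comp val_enum_ord -/(mkseq _ _) mkseq_nth. Qed.

Lemma bigcup_chain_ideal (F : set (set R)) : F `<=` @is_ideal R -> F !=set0 ->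
  total_on F subset -> is_ideal (\bigcup_(X in F) X).
Proof.
move=> Fideal [X0 FX0] Ftot; split; first by exists X0 => //; case: (Fideal X0).
split=> [x y [X FX Xx] [Y FY Yy]|r x [X FX Xx]]; last first.
  by exists X => //; case: (Fideal X FX) => _ [_]; apply.
have [XY|YX] := Ftot X Y FX FY.
  by exists Y => //; case: (Fideal Y FY) => _ [+ _]; apply => //; apply: XY.
by exists X => //; case: (Fideal X FX) => _ [+ _]; apply => //; apply: YX.
Qed.

Lemma bigcup_chain_seq (F : set (set R)) s : F !=set0 -> total_on F subset ->
  (forall x, x \in s -> (\bigcup_(X in F) X) x) ->
  exists2 J, F J & forall x, x \in s -> J x.
Proof.
move=> [X0 FX0] Ftot; elim: s => [|a s IH] hs; first by exists X0.
have [X FX Xa] := hs a (mem_head _ _).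
have [Y FY Ys] : exists2 Y, F Y & forall x, x \in s -> Y x.
  by apply: IH => x xs; apply: hs; rewrite inE xs orbT.
have [XY|YX] := Ftot X Y FX FY.
  by exists Y => // x; rewrite inE => /orP [/eqP ->|/Ys]; [apply: XY|].
by exists X => // x; rewrite inE => /orP [/eqP -> //|/Ys /YX].
Qed.

Lemma bigcup_chain_fg (F : set (set R)) : F `<=` @is_ideal R -> F !=set0 ->
  total_on F subset -> finitely_generated (\bigcup_(X in F) X) ->
  exists2 J, F J & finitely_generated J.
Proof.
move=> Fideal F0 Ftot [s Fs].
have [x xs|J FJ Js] := bigcup_chain_seq (s := s) F0 Ftot.
  by rewrite Fs; exact: gen_seq_mem.
exists J => //; exists s; apply/seteqP; split; last first.
  exact: gen_seq_min (Fideal J FJ) Js.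
by rewrite -Fs => x Jx; exists J.
Qed.

Definition adjoin I x := [set z | exists q r, I q /\ z = q + r * x].

Definition colon I x := [set z | I (z * x)].

Lemma adjoin_ideal I x : is_ideal I -> is_ideal (adjoin I x).
Proof.
move=> [I0 [ID IM]]; split; first by exists 0, 0; rewrite mul0r addr0.
split=> [a b [q1 [r1 [h1 ->]]] [q2 [r2 [h2 ->]]]|c a [q [r [hq ->]]]].
  exists (q1 + q2), (r1 + r2); split; first exact: ID.
  by rewrite mulrDl -!addrA (addrCA (r1 * x)).
by exists (c * q), (c * r); split; [exact: IM | rewrite mulrDr mulrA].
Qed.

Lemma sub_adjoin I x : I `<=` adjoin I x.
Proof. by move=> q Iq; exists q, 0; rewrite mul0r addr0. Qed.

Lemma adjoin_mem I x : I 0 -> adjoin I x x.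
Proof. by exists 0, 1; rewrite mul1r add0r. Qed.

Lemma colon_ideal I x : is_ideal I -> is_ideal (colon I x).
Proof.
move=> [I0 [ID IM]]; split; first by rewrite /colon /= mul0r.
split=> [a b Ia Ib|c a Ia]; rewrite /colon /=.
  by rewrite mulrDl; exact: ID.
by rewrite -mulrA; exact: IM.
Qed.

Lemma sub_colon I x : is_ideal I -> I `<=` colon I x.
Proof. by move=> [_ [_ IM]] q Iq; rewrite /colon /= mulrC; exact: IM. Qed.

Lemma gen_seq_adjoin I x s : (forall z, z \in s -> adjoin I x z) ->
  exists qs, (forall q, q \in qs -> I q) /\
    gen_seq s `<=` adjoin (gen_seq qs) x.
Proof.
elim: s => [|a s IH] hs.
  by exists [::]; split=> // z /= ->; exists 0, 0; rewrite mul0r addr0.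
have [q [r [Iq ->]]] := hs a (mem_head _ _).
have [qs [qsI sqs]] : exists qs, (forall q, q \in qs -> I q) /\
    gen_seq s `<=` adjoin (gen_seq qs) x.
  by apply: IH => z zs; apply: hs; rewrite inE zs orbT.
exists (q :: qs); split=> [q'|z [c [y [/sqs [q' [r' [hq' ->]]] ->]]]].
  by rewrite inE => /orP [/eqP ->|/qsI].
exists (c * q + q'), (c * r + r'); split; first by exists c, q'.
by rewrite mulrDr mulrDl !mulrA -!addrA; congr (_ + _); rewrite addrCA.
Qed.

(* If [I + Rx = (q_i, x)] with [q_i] in [I] and [(I : x) = (t_j)], then
   [I = (q_i, t_j x)]. *)
Lemma fg_adjoin_colon I x : is_ideal I ->
  finitely_generated (adjoin I x) -> finitely_generated (colon I x) ->
  finitely_generated I.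
Proof.
move=> hI [s hs] [t ht].
have [qs [qsI sqs]] : exists qs, (forall q, q \in qs -> I q) /\
    gen_seq s `<=` adjoin (gen_seq qs) x.
  by apply: gen_seq_adjoin => z zs; rewrite hs; exact: gen_seq_mem.
exists (qs ++ [seq u * x | u <- t]); apply/seteqP; split=> [z Iz|].
  have [q [r [hq zE]]] : adjoin (gen_seq qs) x z.
    by apply: sqs; rewrite -hs; exact: sub_adjoin.
  rewrite zE in Iz *.
  apply: gen_seq_cat => //; apply: gen_seq_mulr; rewrite -ht /colon /=.
  have -> : r * x = (q + r * x) - q by rewrite [q + _]addrC addrK.
  by apply: idealB Iz _ => //; exact: gen_seq_min hq.
apply: gen_seq_min => // z; rewrite mem_cat => /orP [/qsI //|/mapP [u ut ->]].
by have : colon I x u by rewrite ht; exact: gen_seq_mem.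
Qed.

Lemma max_non_fg_prime Q : is_ideal Q -> ~ finitely_generated Q ->
  (forall J, is_ideal J -> Q `<` J -> finitely_generated J) -> is_prime Q.
Proof.
move=> hQ nfgQ Qmax; split=> //; split=> [Q1|x y Qxy].
  apply: nfgQ; exists [:: 1]; apply/seteqP; split; last first.
    by apply: gen_seq_min => // x; rewrite inE => /eqP ->.
  by move=> x Qx; exists x, 0; rewrite mulr1 addr0.
apply: contrapT => /not_orP [nQx nQy]; apply: nfgQ.
apply: (fg_adjoin_colon (x := x)) => //; apply: Qmax.
- exact: adjoin_ideal.
- split; first exact: sub_adjoin.
  by move=> /(_ x (adjoin_mem x (proj1 hQ))).
- exact: colon_ideal.
- split; first exact: sub_colon.
  by move=> /(_ y) colonQ; apply/nQy/colonQ; rewrite /colon /= mulrC.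
Qed.

Lemma max_non_fg_exists I : is_ideal I -> ~ finitely_generated I ->
  exists Q, [/\ is_ideal Q, ~ finitely_generated Q &
    forall J, is_ideal J -> Q `<` J -> finitely_generated J].
Proof.
move=> hI nfgI.
pose P J := [/\ is_ideal J, I `<=` J & ~ finitely_generated J].
have [|F FP F0 Ftot|Q [[hQ IQ nfgQ] Qmax]] := @Zorn_bigcup_nonempty _ P.
- by exists I; split.
- have Fideal : F `<=` @is_ideal R by move=> J /FP [].
  rewrite /P; split; first exact: bigcup_chain_ideal.
    by case: F0 => J FJ x Ix; exists J => //; case: (FP J FJ) => _ + _; apply.
  by case/(bigcup_chain_fg Fideal F0 Ftot) => J /FP [].
- exists Q; split=> // J hJ QJ; apply: contrapT => nfgJ; apply: (Qmax J QJ).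
  by rewrite /P; split=> //; apply: subset_trans IQ (properW QJ).
Qed.

Theorem Cohen_fg :
  (forall P, is_prime P -> finitely_generated P) ->
  forall I, is_ideal I -> finitely_generated I.
Proof.
move=> prime_fg I hI; apply: contrapT => /(max_non_fg_exists hI).
move=> [Q [hQ nfgQ Qmax]].
exact/nfgQ/prime_fg/max_non_fg_prime.
Qed.

Lemma fg_of_finite_chains s P : is_ideal P -> gen_seq s `<=` P ->
  (forall C : set (set R),
     (forall J, C J -> is_ideal J /\ gen_seq s `<=` J /\ J `<=` P) ->
     is_chain C -> finite_set C) ->
  finitely_generated P.
Proof.
move=> hP sP chain_fin; apply: contrapT => nfgP.
have grow t : exists x, (forall y, y \in t -> P y) -> P x /\ ~ gen_seq t x.
  have [[x xP]|noext] := pselect (exists x, P x /\ ~ gen_seq t x).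
    by exists x.
  exists 0 => tP; exfalso; apply: nfgP; exists t; apply/seteqP.
  split; last exact: gen_seq_min.
  by move=> x Px; apply: contrapT => ntx; apply: noext; exists x.
have [g hg] := choice grow.
pose ts k := iter k (fun t => g t :: t) s.
have tsP k y : y \in ts k -> P y.
  elim: k y => [|k IH] y /=; first by move/gen_seq_mem/sP.
  by rewrite inE => /orP [/eqP ->|/IH //]; case: (hg _ IH).
pose f k := gen_seq (ts k).
have f_strict k : f k `<` f k.+1.
  split; first exact: gen_seq_cons.
  by move/(_ _ (gen_seq_mem (mem_head _ _))); case: (hg _ (tsP k)).
apply: (strict_chain_range_infinite f_strict); apply: chain_fin.
  move=> J [k _ <-]; split; first exact: gen_seq_ideal.
  split; first exact: (strict_chain_le f_strict (leq0n k)).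
  exact: gen_seq_min hP (tsP k).
move=> J K [k _ <-] [m _ <-]; have [km|mk] := leqP k m.
  by left; exact: strict_chain_le.
by right; apply: strict_chain_le => //; exact: ltnW.
Qed.

Lemma radically_finite_prime_fg : radically_finite R ->
  forall P, is_prime P -> finitely_generated P.
Proof.
move=> RF P hP; have [_ [n [_ [A [[th [-> radA]] [_ chain_fin]]]]]] := RF P hP.
apply: (fg_of_finite_chains (s := [seq th i | i <- enum 'I_n])).
all: rewrite -?gen_idealE //.
  by case: hP.
by rewrite -radA => x Ax; exists 1%N; rewrite expr1.
Qed.

End GeneratedIdeals.

Theorem corollary2p2 (R : comPzRingType) :
  radically_finite R -> finite_krull_dim R -> noetherian R.
Proof.
move=> /radically_finite_prime_fg prime_fg _ I /(Cohen_fg prime_fg) [s ->].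
by exists (size s), (fun i => s`_i); exact: gen_seq_gen_ideal.
Qed.
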